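(* There exists an $AP_3$-covering sequence $A$ of nonnegative integers such that $$\limsup_{n\to\infty}\frac{A(n)}{\sqrt n}=\sqrt{15}.$$
   Context: A sequence (set) $A$ of nonnegative integers is called an $AP_k$-covering sequence if there exists an integer $n_0$ such that for every integer $n>n_0$ there exist $a_1,\dots,a_{k-1}\in A$ with $a_1<a_2<\cdots<a_{k-1}<n$ such that $a_1,\dots,a_{k-1},n$ form a $k$-term arithmetic progression. Here $k=3$. $A(n)$ denotes the counting function $A(n)=\#\{a\in A: a\le n\}$. *)

From HB Require Import structures.
From mathcomp Require Import all_boot all_order all_algebra.
From mathcomp Require Import all_classical all_reals all_analysis.
Set Implicit Arguments. Unset Strict Implicit. Unset Printing Implicit Defensive.
Import Order.TTheory GRing.Theory Num.Theory.

Definition AP3_covering (A : pred nat) : Prop :=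
  exists n0 : nat, forall n : nat, n0 < n ->
    exists a1 a2 : nat, [/\ A a1, A a2, a1 < a2, a2 < n & a2 - a1 = n - a2].

Definition countA (A : pred nat) (n : nat) : nat := count A (iota 0 n.+1).

From HB Require Import structures.
From mathcomp Require Import all_boot all_order all_algebra.
From mathcomp Require Import all_classical all_reals all_analysis.
From mathcomp Require Import zify lra.
Import Order.TTheory GRing.Theory Num.Theory.
Set Implicit Arguments. Unset Strict Implicit. Unset Printing Implicit Defensive.

(* Let B be the set of numbers whose base-4 digits below the leading one are
   all 0 or 1.  B has at most sqrt (12 n) elements up to n, and at least
   sqrt (12 n) - 2 when n = (4^(k+1) - 1)/3.  B alone is AP_3-covering: for
   such a repunit T, every n in (2 T, 8 T + 2] is 2 b - (T - x) with b in B
   and x a sum of distinct powers of 4, because the numbers 2 x + y with x, y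
   sums of distinct powers of 4 below 4^(k+1) fill [0, 4^(k+1)).  Adding the
   markers 4 q + 3 of the increments of q |-> floor (2 c sqrt q), with
   c = sqrt 15 - sqrt 12, raises the count by at most c sqrt n and by at
   least c sqrt n - 3, which gives limsup A(n)/sqrt n = sqrt 15. *)

Lemma halving_ind (lo : nat) (P : nat -> Prop) : 0 < lo ->
  (forall m, m < 2 * lo -> P m) ->
  (forall h (b : bool), lo <= h -> P h -> P (2 * h + b)) ->
  forall m, P m.
Proof.
move=> lo_gt0 Psmall Pbit; elim/ltn_ind=> m IHm.
have [/Psmall //|m_ge] := ltnP m (2 * lo).
rewrite -[m]odd_double_half addnC -muln2 mulnC.
have half_lt : m./2 < m by rewrite -divn2; lia.
by apply: Pbit; [rewrite -divn2; lia | apply: IHm].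
Qed.

Fixpoint bin4_rec (lo : nat) (base : nat -> nat) (fuel m : nat) : nat :=
  if fuel is fuel'.+1 then
    if m < lo then base m else 4 * bin4_rec lo base fuel' m./2 + odd m
  else 0.

(* [bin4 lo base m] halves [m] until it drops below [lo], applies [base]
   there, and reads the binary digits shifted out on the way in base 4. *)
Definition bin4 (lo : nat) (base : nat -> nat) (m : nat) : nat :=
  bin4_rec lo base m.+1 m.

Lemma bin4_rec_fuel lo base f f' m : 0 < lo -> m < f -> m < f' ->
  bin4_rec lo base f m = bin4_rec lo base f' m.
Proof.
move=> lo_gt0; elim: f f' m => [|f IHf] [|f'] m //= mf mf'.
by case: ltnP => // m_ge; congr (4 * _ + _); apply: IHf; rewrite -divn2; lia.
Qed.

Lemma bin4E lo base m : 0 < lo ->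
  bin4 lo base m = if m < lo then base m else 4 * bin4 lo base m./2 + odd m.
Proof.
move=> lo_gt0; rewrite {1}/bin4 [LHS]/=; case: ltnP => // m_ge.
by congr (4 * _ + _); apply: bin4_rec_fuel; rewrite // -divn2; lia.
Qed.

Lemma bin4_bit lo base h (b : bool) : 0 < lo -> lo <= 2 * h ->
  bin4 lo base (2 * h + b) = 4 * bin4 lo base h + b.
Proof.
move=> lo_gt0 h_ge; rewrite bin4E // ifN -?leqNgt; last lia.
have half_eq : (2 * h + b)./2 = h by rewrite -divn2; case: b; lia.
by rewrite half_eq oddD mul2n odd_double oddb.
Qed.

Lemma nat_bit_split m : exists h (b : bool), m = 2 * h + b.
Proof. by exists m./2, (odd m); rewrite -[m in LHS]odd_double_half addnC mul2n. Qed.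

(* The Moser-de Bruijn sequence: the binary digits of [i] read in base 4. *)
Definition moser : nat -> nat := bin4 1 (fun=> 0).

(* From [m = 2] on, an increasing enumeration of the numbers whose base-4
   digits are 0 or 1 except for the leading one: the leading block 10, 11, 100
   or 101 of the binary expansion of [m] becomes the digit 0, 1, 2 or 3. *)
Definition moser_lead : nat -> nat := bin4 6 (subn^~ 2).

Fixpoint repunit4 (k : nat) : nat := if k is k'.+1 then 4 * repunit4 k' + 1 else 0.

Lemma repunit4E k : 3 * repunit4 k + 1 = 4 ^ k.
Proof. by elim: k => [|k IHk] //=; rewrite expnS; lia. Qed.

Lemma repunit4_ge k : k <= repunit4 k.
Proof. by elim: k => [|k IHk] //=; lia. Qed.

Lemma moser_bit i (b : bool) : moser (2 * i + b) = 4 * moser i + b.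
Proof. by case: i => [|i]; [case: b | apply: bin4_bit; lia]. Qed.

Lemma moser_lead_bit h (b : bool) : 2 < h ->
  moser_lead (2 * h + b) = 4 * moser_lead h + b.
Proof. by move=> h_gt2; apply: bin4_bit; lia. Qed.

Lemma moser_split k w : w < 4 ^ k ->
  exists a b, [/\ a < 2 ^ k, b < 2 ^ k & w = 2 * moser a + moser b].
Proof.
elim: k w => [|k IHk] w w_lt; first by exists 0, 0; case: w w_lt.
have [h [b0 w_eq]] := nat_bit_split w; have [q [b1 h_eq]] := nat_bit_split h.
subst w h; have q_lt : q < 4 ^ k by rewrite expnS in w_lt; lia.
have [a [b [a_lt b_lt ->]]] := IHk q q_lt.
by exists (2 * a + b1), (2 * b + b0); rewrite !moser_bit !expnS; split; lia.
Qed.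

Lemma moser_compl k b : b < 2 ^ k -> moser b + moser (2 ^ k - 1 - b) = repunit4 k.
Proof.
elim: k b => [|k IHk] b b_lt; first by case: b b_lt.
have [h [e b_eq]] := nat_bit_split b; subst b.
have h_lt : h < 2 ^ k by rewrite expnS in b_lt; lia.
have -> : 2 ^ k.+1 - 1 - (2 * h + e) = 2 * (2 ^ k - 1 - h) + ~~ e.
  by rewrite expnS; case: e in b_lt *; lia.
have := IHk h h_lt; rewrite !moser_bit /=; case: e {b_lt}; lia.
Qed.

Lemma moser_lead_pow2D k a : a < 2 ^ k.+1 ->
  moser_lead (2 ^ k.+2 + a) = 2 * 4 ^ k + moser a.
Proof.
elim: k a => [|k IHk] a a_lt; first by case: a a_lt => [|[|]].
have [h [e a_eq]] := nat_bit_split a; subst a.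
have h_lt : h < 2 ^ k.+1 by rewrite expnS in a_lt; lia.
have -> : 2 ^ k.+3 + (2 * h + e) = 2 * (2 ^ k.+2 + h) + e by rewrite (expnS 2 k.+2); lia.
rewrite moser_lead_bit ?IHk // ?moser_bit ?expnS; lia.
Qed.

Lemma moser_lead_3pow2D k a : a < 2 ^ k -> moser_lead (3 * 2 ^ k + a) = 4 ^ k + moser a.
Proof.
elim: k a => [|k IHk] a a_lt; first by case: a a_lt.
have [h [e a_eq]] := nat_bit_split a; subst a.
have h_lt : h < 2 ^ k by rewrite expnS in a_lt; lia.
have -> : 3 * 2 ^ k.+1 + (2 * h + e) = 2 * (3 * 2 ^ k + h) + e by rewrite expnS; lia.
rewrite moser_lead_bit ?IHk // ?moser_bit ?expnS; lia.
Qed.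

Lemma moser_lead_ones k : moser_lead (2 ^ k.+2 - 1) = repunit4 k.+1.
Proof.
have -> : 2 ^ k.+2 - 1 = 3 * 2 ^ k + (2 ^ k - 1) by rewrite !expnS; lia.
have moser_ones : moser (2 ^ k - 1) = repunit4 k.
  by have := @moser_compl k 0; rewrite expn_gt0 subn0 => /(_ isT).
rewrite moser_lead_3pow2D ?moser_ones -?repunit4E /=; lia.
Qed.

Lemma sqr_le_moser_lead m : 2 < m -> (m + 1) ^ 2 <= 12 * moser_lead m + 4.
Proof.
elim/(@halving_ind 3): m => // [m m_lt6|h b h_gt2 IHh] m_gt2.
  by case: m m_lt6 m_gt2 => [|[|[|[|[|[|]]]]]].
by have := IHh h_gt2; rewrite moser_lead_bit //; nia.
Qed.

Lemma moser_lead_ltS m : 1 < m -> moser_lead m < moser_lead m.+1.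
Proof.
elim/(@halving_ind 3): m => // [m m_lt6|h b h_gt2 IHh] m_gt1.
  by case: m m_lt6 m_gt1 => [|[|[|[|[|[|]]]]]].
case: b {m_gt1}.
  have -> : (2 * h + true).+1 = 2 * h.+1 + false by rewrite /=; lia.
  by rewrite !moser_lead_bit //; have := IHh (ltnW h_gt2); lia.
have -> : (2 * h + false).+1 = 2 * h + true by rewrite /=; lia.
by rewrite !moser_lead_bit //; lia.
Qed.

Lemma moser_lead_lt : {in [pred m | 1 < m] &, {homo moser_lead : m n / m < n}}.
Proof.
apply: homo_ltn_in => [m n k|m n|m]; rewrite ?inE.
- exact: ltn_trans.
- by move=> m_gt1 _ k /andP[/(ltn_trans m_gt1)].
- by move=> m_gt1 _; apply: moser_lead_ltS.
Qed.

Lemma moser_lead_inj : {in [pred m | 1 < m] &, injective moser_lead}.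
Proof.
move=> m n m_gt1 n_gt1 eq_mn; case: (ltngtP m n) => // [lt_mn|lt_nm].
  by have := moser_lead_lt m_gt1 n_gt1 lt_mn; rewrite eq_mn ltnn.
by have := moser_lead_lt n_gt1 m_gt1 lt_nm; rewrite eq_mn ltnn.
Qed.

Lemma moser_lead_eq_moser i : 0 < i -> exists2 m, 2 < m & moser_lead m = moser i.
Proof.
elim/(@halving_ind 1): i => // [i i_lt2|h b h_gt0 IHh] i_gt0.
  by exists 3 => //; case: i i_lt2 i_gt0 => [|[|]].
have [m m_gt2 m_eq] := IHh h_gt0.
by exists (2 * m + b); [lia | rewrite moser_lead_bit // moser_bit m_eq].
Qed.

Lemma moser_lead_mod4 m : moser_lead m %% 4 = 3 -> moser_lead m = 3.
Proof.
by rewrite /moser_lead bin4E //=; case: ltnP => m_lt6; [lia | case: (odd m); lia].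
Qed.

Definition moser_lead_set : pred nat :=
  fun x => `[< exists2 m, 1 < m & moser_lead m = x >].

Lemma moser_in_lead_set i : moser_lead_set (moser i).
Proof.
apply/asboolP; case: (posnP i) => [->|i_gt0]; first by exists 2.
by have [m m_gt2 m_eq] := moser_lead_eq_moser i_gt0; exists m; first exact: ltnW.
Qed.

Lemma count_moser_lead_set_sqr_le n : 0 < n ->
  count moser_lead_set (iota 0 n.+1) ^ 2 <= 12 * n.
Proof.
move=> n_gt0; rewrite -size_filter; set s := seq.filter _ _; set c := size s.
have [c_le1|c_gt1] := leqP c 1; first by nia.
(* Otherwise the [c] elements of [s] would be values of [moser_lead] on [2, c]. *)
rewrite leqNgt; apply/negP => c_big.
have s_sub : {subset s <= map moser_lead (iota 2 c.-1)}.
  move=> x; rewrite mem_filter mem_iota.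
  move=> /andP[/asboolP[m m_gt1 <-] /andP[_ x_le]].
  rewrite map_f // mem_iota m_gt1 /=.
  have [m_le2|m_gt2] := leqP m 2; first by lia.
  by have := sqr_le_moser_lead m_gt2; nia.
have := uniq_leq_size (filter_uniq _ (iota_uniq 0 n.+1)) s_sub.
by rewrite size_map size_iota -/c; lia.
Qed.

Lemma count_moser_lead_set_repunit_ge k :
  12 * repunit4 k.+1 <= (count moser_lead_set (iota 0 (repunit4 k.+1).+1) + 2) ^ 2.
Proof.
have count_ge : 2 ^ k.+2 - 2 <= count moser_lead_set (iota 0 (repunit4 k.+1).+1).
  rewrite -size_filter -(size_iota 2 (2 ^ k.+2 - 2)) -(size_map moser_lead).
  apply: uniq_leq_size => [|_ /mapP[m m_in ->]].
    rewrite map_inj_in_uniq ?iota_uniq // => m n.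
    by rewrite !mem_iota => /andP[m_gt1 _] /andP[n_gt1 _]; apply: moser_lead_inj.
  move: m_in; rewrite mem_iota mem_filter => /andP[m_gt1 m_lt].
  apply/andP; split; first by apply/asboolP; exists m.
  rewrite mem_iota add0n ltnS -moser_lead_ones leq0n /=.
  have [->|m_neq] := eqVneq m (2 ^ k.+2 - 1); first by [].
  by apply/ltnW/moser_lead_lt; rewrite ?inE //; lia.
have square_eq : 12 * repunit4 k.+1 + 4 = (2 ^ k.+2) ^ 2.
  by rewrite -expnM (mulnC k.+2) expnM -repunit4E /=; lia.
have pow_ge2 : 2 <= 2 ^ k.+2 by rewrite (expnS 2 k.+1) leq_pmulr ?expn_gt0.
by nia.
Qed.

Lemma repunit4_bracket n : 2 < n -> exists k, 2 * repunit4 k.+1 < n <= 2 * repunit4 k.+2.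
Proof.
elim: n => // n IHn; rewrite ltnS leq_eqVlt => /predU1P[<-|n_gt2]; first by exists 0.
have [k /andP[lt_n le_n]] := IHn n_gt2.
have [n_lt|n_eq] : n < 2 * repunit4 k.+2 \/ n = 2 * repunit4 k.+2 by lia.
  by exists k; lia.
by exists k.+1; rewrite n_eq /=; lia.
Qed.

(* [n = 2 (s + moser a) - (repunit4 k.+1 - moser b)] is solvable because the
   sums [2 * moser a + moser b] fill [0, 4 ^ k.+1) (moser_split), and
   [repunit4 k.+1 - moser b] is again a Moser-de Bruijn number (moser_compl). *)
Lemma moser_lead_ap3_shift k s n :
  (forall a, a < 2 ^ k.+1 -> moser_lead_set (s + moser a)) ->
  2 * 4 ^ k <= s -> 2 * s <= n + repunit4 k.+1 < 2 * s + 4 ^ k.+1 ->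
  exists a1 a2,
    [/\ moser_lead_set a1, moser_lead_set a2, a1 < a2, a2 < n & a2 - a1 = n - a2].
Proof.
move=> shift_in s_ge /andP[n_ge n_lt].
have w_lt : n + repunit4 k.+1 - 2 * s < 4 ^ k.+1 by lia.
have [a [b [a_lt b_lt w_eq]]] := moser_split w_lt.
have compl := moser_compl b_lt.
have := repunit4E k.+1; rewrite expnS => repunit_eq; rewrite expnS in n_lt.
exists (moser (2 ^ k.+1 - 1 - b)), (s + moser a).
by split; rewrite ?shift_in ?moser_in_lead_set //; lia.
Qed.

Lemma moser_lead_ap3 n : 2 < n ->
  exists a1 a2,
    [/\ moser_lead_set a1, moser_lead_set a2, a1 < a2, a2 < n & a2 - a1 = n - a2].
Proof.
move=> /repunit4_bracket[k /andP[n_gt n_le]].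
have := repunit4E k.+1; rewrite expnS => repunit_eq.
have repunit_next : repunit4 k.+2 = 4 * repunit4 k.+1 + 1 by [].
have pow_gt0 : 0 < 2 ^ k by rewrite expn_gt0.
have [n_lt|n_ge] := ltnP (n + repunit4 k.+1) (8 * 4 ^ k).
  apply: (@moser_lead_ap3_shift k (2 * 4 ^ k)); rewrite ?expnS; try lia.
  move=> a a_lt; apply/asboolP; exists (2 ^ k.+2 + a).
    by rewrite !expnS; lia.
  by rewrite moser_lead_pow2D // expnS.
apply: (@moser_lead_ap3_shift k (4 ^ k.+1)); rewrite ?expnS; try lia.
move=> a a_lt; apply/asboolP; exists (3 * 2 ^ k.+1 + a).
  by rewrite expnS; lia.
by rewrite moser_lead_3pow2D // expnS.
Qed.

(* The truncated [x %/ 4 - 1] leaves 3 unmarked: 3 is the only element of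
   [moser_lead_set] that is 3 modulo 4. *)
Definition step_marks (g : nat -> nat) : pred nat :=
  fun x => (x %% 4 == 3) && (g (x %/ 4 - 1) < g (x %/ 4)).

Lemma count_step_marks g n : g 0 = 0 -> (forall j, g j <= g j.+1 <= (g j).+1) ->
  count (step_marks g) (iota 0 n.+1) = g (n.+1 %/ 4 - 1).
Proof.
move=> g0 g_step; elim: n => [|n IHn]; first by rewrite /= /step_marks /= g0.
rewrite -[n.+2]addn1 iotaD count_cat IHn /= addn0 add0n /step_marks.
have [n_mod|n_mod] := eqVneq (n.+1 %% 4) 3; last by rewrite addn0; congr g; lia.
have -> : (n.+1 + 1) %/ 4 - 1 = n.+1 %/ 4 by lia.
case: (n.+1 %/ 4) => [|q]; first by rewrite ltnn addn0.
by rewrite subSS subn0 /=; have := g_step q; case: ltnP; lia.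
Qed.

Lemma moser_lead_set_step_marks g x : moser_lead_set x -> step_marks g x = false.
Proof.
move=> /asboolP[m _ <-]; apply/negbTE/nandP.
case: (eqVneq (moser_lead m %% 4) 3) => [/moser_lead_mod4 ->|]; last by left.
by right; rewrite ltnn.
Qed.

Local Open Scope ring_scope.

Lemma limn_esup_EFin (R : realType) (u : nat -> R) (l : R) :
  (forall n, u n <= l) ->
  (forall e, 0 < e -> forall N, exists2 n, (N <= n)%N & l - e <= u n) ->
  limn_esup (fun n => (u n)%:E) = l%:E.
Proof.
move=> u_le u_frequently.
have esups_cst : esups (fun n => (u n)%:E) = fun=> l%:E.
  apply/funext => N; apply/eqP; rewrite eq_le; apply/andP; split.
    by apply/ereal_supP => _ [m _ <-]; rewrite lee_fin.
  apply/lee_addgt0Pr => e e_gt0; have [n N_le u_ge] := u_frequently e e_gt0 N.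
  rewrite -leeBlDr // -EFinB; apply: le_ereal_sup_tmp.
  by exists (u n)%:E; [exists n | rewrite lee_fin].
by rewrite limn_esup_lim esups_cst; apply: lim_cst.
Qed.

Lemma le_sqrtM (R : rcfType) (x a b : R) : 0 <= a ->
  x ^+ 2 <= a * b -> x <= Num.sqrt a * Num.sqrt b.
Proof.
move=> a_ge0 x2_le; rewrite -sqrtrM // (le_trans (ler_norm x)) // -sqrtr_sqr.
by rewrite ler_sqrt // (le_trans _ x2_le) ?sqr_ge0.
Qed.

Lemma sqrtM_le (R : rcfType) (x a b : R) : 0 <= a -> 0 <= x ->
  a * b <= x ^+ 2 -> Num.sqrt a * Num.sqrt b <= x.
Proof.
move=> a_ge0 x_ge0 x2_ge; rewrite -sqrtrM // -(ger0_norm x_ge0) -sqrtr_sqr.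
by rewrite ler_sqrt ?sqr_ge0.
Qed.

Lemma truncn_mul_sqrt_step (R : realType) (a : R) j : 0 <= a <= 1 ->
  let t i := Num.truncn (a * Num.sqrt (i%:R : R)) in (t j <= t j.+1 <= (t j).+1)%N.
Proof.
move=> /andP[a_ge0 a_le1] /=.
set x := Num.sqrt (j%:R : R); set y := Num.sqrt (j.+1%:R : R).
have x_ge0 : 0 <= x := sqrtr_ge0 _.
have y_ge0 : 0 <= y := sqrtr_ge0 _.
have x_sq : x ^+ 2 = j%:R by rewrite sqr_sqrtr.
have y_sq : y ^+ 2 = j%:R + 1 by rewrite sqr_sqrtr // -natr1.
have x_le_y : x <= y by nra.
have y_le_x1 : y <= x + 1 by nra.
apply/andP; split; first by apply: le_truncn; nra.
by rewrite truncn_le_nat; have := truncnS_gt (a * x); rewrite -!natr1; nra.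
Qed.

Section Sqrt15Set.
Variable R : realType.

Let c : R := Num.sqrt 15%:R - Num.sqrt 12%:R.

Lemma sqrt15_sub_sqrt12_bounds : 0 <= c /\ 2 * c <= 1.
Proof.
have s12_sq : Num.sqrt 12%:R ^+ 2 = 12%:R :> R by rewrite sqr_sqrtr.
have s15_sq : Num.sqrt 15%:R ^+ 2 = 15%:R :> R by rewrite sqr_sqrtr.
have s12_ge0 : 0 <= Num.sqrt 12%:R :> R := sqrtr_ge0 _.
have s15_ge0 : 0 <= Num.sqrt 15%:R :> R := sqrtr_ge0 _.
have s12_ge3 : 3 <= Num.sqrt 12%:R :> R by nra.
by rewrite /c; split; nra.
Qed.

Let g j := Num.truncn (2 * c * Num.sqrt (j%:R : R)).

Definition sqrt15_set : pred nat := predU moser_lead_set (step_marks g).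

Lemma sqrt15_set_AP3_covering : AP3_covering sqrt15_set.
Proof.
exists 2%N => n /moser_lead_ap3[a1 [a2 [a1_in a2_in lt_a12 lt_a2n ap]]].
by exists a1, a2; split => //; apply/orP; left.
Qed.

Lemma countA_sqrt15_set n :
  countA sqrt15_set n = (count moser_lead_set (iota 0 n.+1) + g (n.+1 %/ 4 - 1))%N.
Proof.
have [c_ge0 c_le] := sqrt15_sub_sqrt12_bounds.
have g0 : g 0 = 0%N by rewrite /g sqrtr0 mulr0 truncn0.
have g_step j : (g j <= g j.+1 <= (g j).+1)%N.
  by apply: truncn_mul_sqrt_step; rewrite c_le mulr_ge0.
rewrite /countA -(count_step_marks n g0 g_step) -count_predUI.
rewrite (@eq_count _ (predI _ _) pred0) ?count_pred0 ?addn0 // => x /=.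
by case: (boolP (moser_lead_set x)) => //= /moser_lead_set_step_marks ->.
Qed.

Lemma countA_sqrt15_set_le n : (0 < n)%N ->
  (countA sqrt15_set n)%:R <= Num.sqrt 15%:R * Num.sqrt (n%:R : R).
Proof.
move=> n_gt0; have [c_ge0 _] := sqrt15_sub_sqrt12_bounds.
rewrite countA_sqrt15_set natrD.
set J := (n.+1 %/ 4 - 1)%N; set r := Num.sqrt (n%:R : R); set s := Num.sqrt (J%:R : R).
have [r_ge0 s_ge0] : 0 <= r /\ 0 <= s by split; apply: sqrtr_ge0.
have lead_le : (count moser_lead_set (iota 0 n.+1))%:R <= Num.sqrt 12%:R * r.
  by apply: le_sqrtM; rewrite // -natrX -natrM ler_nat count_moser_lead_set_sqr_le.
have marks_le : (g J)%:R <= 2 * c * s by rewrite truncn_le !mulr_ge0.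
have s_le : 2 * s <= r.
  have [r_sq s_sq] : r ^+ 2 = n%:R /\ s ^+ 2 = J%:R by split; rewrite sqr_sqrtr.
  have J_le : 4 * J%:R <= n%:R :> R by rewrite -natrM ler_nat /J; lia.
  by nra.
have -> : Num.sqrt 15%:R = Num.sqrt 12%:R + c by rewrite /c addrC subrK.
by nra.
Qed.

Lemma countA_sqrt15_set_repunit_ge k :
  Num.sqrt 15%:R * Num.sqrt ((repunit4 k.+1)%:R : R) - 5%:R
    <= (countA sqrt15_set (repunit4 k.+1))%:R.
Proof.
have [c_ge0 c_le] := sqrt15_sub_sqrt12_bounds.
rewrite countA_sqrt15_set natrD; set n := repunit4 k.+1.
set J := (n.+1 %/ 4 - 1)%N; set r := Num.sqrt (n%:R : R); set s := Num.sqrt (J%:R : R).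
have lead_ge : Num.sqrt 12%:R * r <= (count moser_lead_set (iota 0 n.+1))%:R + 2.
  apply: sqrtM_le; rewrite // ?addr_ge0 // -[2]/(2%:R) -natrD -natrX -natrM ler_nat.
  exact: count_moser_lead_set_repunit_ge.
have marks_gt : 2 * c * s < (g J)%:R + 1 by rewrite natr1; apply: truncnS_gt.
have r_le : r <= 2 * s + 3%:R.
  have [r_ge0 s_ge0] : 0 <= r /\ 0 <= s by split; apply: sqrtr_ge0.
  have [r_sq s_sq] : r ^+ 2 = n%:R /\ s ^+ 2 = J%:R by split; rewrite sqr_sqrtr.
  have n_le : n%:R <= 4 * J%:R + 6%:R :> R by rewrite -natrM -natrD ler_nat /J; lia.
  by nra.
have -> : Num.sqrt 15%:R = Num.sqrt 12%:R + c by rewrite /c addrC subrK.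
by nra.
Qed.

End Sqrt15Set.

Lemma repunit4_sqrt_unbounded (R : realType) (x : R) N :
  exists2 k, (N <= repunit4 k.+1)%N & x < Num.sqrt (repunit4 k.+1)%:R.
Proof.
set t := Num.truncn (x ^+ 2).
have n_gt : (N + t < repunit4 (N + t).+1)%N := repunit4_ge _.
exists (N + t)%N; first by apply: leq_trans n_gt; rewrite ltnW // ltnS leq_addr.
rewrite (le_lt_trans (ler_norm x)) // -sqrtr_sqr ltr_sqrt ?ltr0n; last by lia.
apply: lt_le_trans (truncnS_gt _) _; rewrite ler_nat.
exact: leq_ltn_trans (leq_addl N _) n_gt.
Qed.

Theorem theorem1 (R : realType) :
  exists A : pred nat, AP3_covering A /\
    limn_esup (fun n : nat => (((countA A n)%:R / Num.sqrt (n%:R)) : R)%:E)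
      = (Num.sqrt (15%:R : R))%:E.
Proof.
exists (sqrt15_set R); split; first exact: sqrt15_set_AP3_covering.
apply: limn_esup_EFin => [[|n]|e e_gt0 N].
- by rewrite sqrtr0 invr0 mulr0 sqrtr_ge0.
- by rewrite ler_pdivrMr ?sqrtr_gt0 ?ltr0n // countA_sqrt15_set_le.
have [k N_le sqrt_gt] := repunit4_sqrt_unbounded (5%:R / e) N.
exists (repunit4 k.+1) => //.
have sqrt_gt0 : 0 < Num.sqrt (repunit4 k.+1)%:R :> R.
  by apply: le_lt_trans sqrt_gt; rewrite divr_ge0 ?ler0n ?ltW.
have e_sqrt_gt : 5%:R < e * Num.sqrt (repunit4 k.+1)%:R by rewrite mulrC -ltr_pdivrMr.
rewrite ler_pdivlMr //; apply: le_trans (countA_sqrt15_set_repunit_ge R k); nra.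
Qed.
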